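(* Let $p\ge2$ and $c\ge2$ be integers such that $(p-2)/(c-1)$ is a positive integer, let $d=2^{p-1}$, assume $d\ge 8c(c-1)$, and let $\mu$ be as in the context. Suppose a distribution $\mathcal{D}$ over pairs $(\mathrm{sk},\mathrm{Alg})$ with space complexity $s$ $(1/8,\delta)$-succeeds for Certification, where $\delta\le 1/d$. Then there exist positive integers $k,t$ with $k\ge (d/2)^{1/(c-1)}$ and $kt\le d/2$, and a public-coin one-way protocol $\Pi$ of communication complexity $s$ that $(1/(8c),\delta)$-succeeds for $\textsc{Random-Multi-Index}(k,t)$ on strings of length $d$.
   Context: Let $d=2^{p-1}$. The distribution $\zeta$: sample a uniformly random subset $J_0\subset[d]$ of size $2^{p-2}$; for $i=1,\dots,c-1$, sample $J_i$ uniformly at random among subsets of $J_{i-1}$ of size $2^{-(p-2)/(c-1)}|J_{i-1}|$. Let $x^{(i)}\in\{0,1\}^d$ be the indicator vector of $J_i$, and let $\zeta$ be the distribution of $(x^{(0)},\dots,x^{(c-1)})$. The distribution $\mu$ is the distribution of $\sum_{i=0}^{c-1}x^{(i)}\in\{0,\dots,c\}^d$. The Certification problem: a distribution $\mathcal{D}$ over pairs $(\mathrm{sk},\mathrm{Alg})$, where $\mathrm{sk}\colon\{0,\dots,c\}^{d}\to\{0,1\}^s$ ($s$ is the space complexity) and $\mathrm{Alg}$ takes two strings in $\{0,1\}^s$ and outputs either $\bot$ or a pair $(i,\ell)\in[d]\times[c-1]$. $\mathcal{D}$ $(\alpha,\delta)$-succeeds for Certification if (i) $\Pr_{X,Y\sim\mu,\,(\mathrm{sk},\mathrm{Alg})\sim\mathcal{D}}[\mathrm{Alg}(\mathrm{sk}(X),\mathrm{sk}(Y))\ne\bot]\ge\alpha$,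 with $X,Y$ independent draws from $\mu$; and (ii) for any two points $x,y$ in the support of $\mu$, $\Pr_{(\mathrm{sk},\mathrm{Alg})\sim\mathcal{D}}[\mathrm{Alg}(\mathrm{sk}(x),\mathrm{sk}(y))=(i,\ell)\text{ for some }(i,\ell)\text{ with }\neg(x_i<\ell<y_i)]\le\delta$. For $n\le d$, $S_d(n)$ is the set of vectors in $\{0,1\}^d$ with exactly $n$ ones, and $\mathcal{I}_d(n)$ is the set of subsets of $[d]$ of size exactly $n$. $\textsc{Random-Multi-Index}(k,t)$ on strings of length $d$ (for positive integers $k,t$ with $kt\le d/2$) is the public-coin one-way communication problem in which Alice receives a uniformly random $x\sim S_d(kt)$ and sends a message $m\in\{0,1\}^s$ to Bob ($s$ is the communication complexity); Bob receives an independent uniformly random $I\sim\mathcal{I}_d(t)$ and $m$, and outputs either $\bot$ or an index $i\in I$. A protocol $(\alpha,\delta)$-succeeds if, with probability over $x$, $I$ and the protocol's randomness, (i) Bob outputs an index $i\in I$ with probability at least $\alpha$, and (ii) Bob outputs an index $i\in I$ with $x_i=1$ with probability at most $\delta$. *)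

From HB Require Import structures.
From mathcomp Require Import all_boot all_order all_algebra.
From mathcomp Require Import reals exp.
Set Implicit Arguments. Unset Strict Implicit. Unset Printing Implicit Defensive.
Import Order.TTheory GRing.Theory Num.Theory.
Local Open Scope ring_scope.

Definition dimd (p : nat) : nat := (2 ^ (p - 1))%N.

Definition is_dist (R : realType) (T : finType) (P : T -> R) : Prop :=
  (forall t, 0 <= P t) /\ \sum_(t : T) P t = 1.

Fixpoint jsize (p c i : nat) : nat :=
  match i with
  | 0 => 2 ^ (p - 2)
  | i'.+1 => jsize p c i' %/ 2 ^ ((p - 2) %/ (c - 1))
  end%N.

Definition chain (p c : nat) := (c.-tuple {set 'I_(dimd p)})%type.

Definition Jc (p c : nat) (J : chain p c) (i : nat) : {set 'I_(dimd p)} :=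
  nth set0 J i.

Definition chain_ok (p c : nat) (J : chain p c) : bool :=
  (#|Jc J 0| == jsize p c 0)%N &&
  [forall i : 'I_c, (0 < i)%N ==>
     ((Jc J i \subset Jc J i.-1) && (#|Jc J i| == jsize p c i)%N)].

(* probability of the chain J under the sequential sampling defining zeta *)
Definition zeta (R : realType) (p c : nat) (J : chain p c) : R :=
  if chain_ok J then
    ('C(dimd p, jsize p c 0)%:R)^-1 *
    \prod_(1 <= i < c) ('C(jsize p c i.-1, jsize p c i)%:R)^-1
  else 0.

Definition point (p c : nat) := {ffun 'I_(dimd p) -> 'I_c.+1}.

Definition chain_sum (p c : nat) (J : chain p c) : point p c :=
  [ffun j => inord (\sum_(i < c) ((j \in Jc J i) : nat))%N].

Definition mu (R : realType) (p c : nat) (x : point p c) : R :=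
  \sum_(J : chain p c | chain_sum J == x) zeta R J.

Definition bits (s : nat) := {ffun 'I_s -> bool}.

(* output (i, l) with i in [d], l in [c-1] = {1,...,c-1}; l is encoded
   by an ordinal j : 'I_(c-1) with l = j + 1.  None encodes bottom. *)
Definition cert_out (p c : nat) := option ('I_(dimd p) * 'I_(c - 1)).

Definition cert_pair (p c s : nat) :=
  ({ffun point p c -> bits s} * {ffun (bits s * bits s) -> cert_out p c})%type.

Definition cert_run (p c s : nat) (A : cert_pair p c s) (x y : point p c)
  : cert_out p c := A.2 (A.1 x, A.1 y).

Definition cert_bad (p c s : nat) (A : cert_pair p c s) (x y : point p c) : bool :=
  if cert_run A x y is Some (i, j) then
    ~~ ((x i < (j : nat).+1)%N && ((j : nat).+1 < y i)%N)
  else false.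

Definition cert_succeeds (R : realType) (p c s : nat)
    (D : cert_pair p c s -> R) (alpha delta : R) : Prop :=
  is_dist D /\
  alpha <= \sum_(x : point p c) \sum_(y : point p c) \sum_(A : cert_pair p c s)
              mu R x * mu R y * D A * (cert_run A x y != None)%:R /\
  (forall x y : point p c, 0 < mu R x -> 0 < mu R y ->
     \sum_(A : cert_pair p c s) D A * (cert_bad A x y)%:R <= delta).

(* a deterministic one-way protocol: Alice's message function and Bob's
   output function; a public-coin protocol is a distribution over these. *)
Definition rmi_pair (d s : nat) :=
  ({ffun {ffun 'I_d -> bool} -> bits s} *
   {ffun ({set 'I_d} * bits s) -> option 'I_d})%type.

Definition rmi_out (d s : nat) (P : rmi_pair d s) (x : {ffun 'I_d -> bool})
  (I : {set 'I_d}) : option 'I_d := P.2 (I, P.1 x).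

Definition rmi_succeeds (R : realType) (d s k t : nat)
    (Pi : rmi_pair d s -> R) (alpha delta : R) : Prop :=
  is_dist Pi /\
  (forall P, 0 < Pi P -> forall I m,
      match P.2 (I, m) with Some i => i \in I | None => true end) /\
  alpha <= \sum_(x : {ffun 'I_d -> bool} | #|[set i | x i]| == (k * t)%N)
            \sum_(I : {set 'I_d} | #|I| == t) \sum_(P : rmi_pair d s)
              ('C(d, k * t)%:R)^-1 * ('C(d, t)%:R)^-1 * Pi P *
              (if rmi_out P x I is Some i then i \in I else false)%:R /\
  \sum_(x : {ffun 'I_d -> bool} | #|[set i | x i]| == (k * t)%N)
     \sum_(I : {set 'I_d} | #|I| == t) \sum_(P : rmi_pair d s)
       ('C(d, k * t)%:R)^-1 * ('C(d, t)%:R)^-1 * Pi P *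
       (if rmi_out P x I is Some i then (i \in I) && x i else false)%:R
     <= delta.

From HB Require Import structures.
From mathcomp Require Import all_boot all_order all_algebra.
From mathcomp Require Import reals exp.
From mathcomp Require Import perm ring lra zify.
Import Order.TTheory GRing.Theory Num.Theory.
Set Implicit Arguments. Unset Strict Implicit. Unset Printing Implicit Defensive.

(* Some level l+1 is certified with probability at least 1/(8(c-1)).  Take k = 2^((p-2)/(c-1))
   and t = |J_(l+1)|, so that kt = |J_l|.  Since zeta is invariant under permutations of [d],
   J_l is uniform among sets of its size, so with public randomness Alice can complete her set
   x to a zeta-chain with J_l = x and Bob his set I to an independent zeta-chain with
   J_(l+1) = I; their sums X and Y are then independent samples of mu.  Bob runs Alg on the two
   sketches and outputs i whenever Alg answers (i, l+1) with i in I.  A correct answer has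
   X_i < l+1 < Y_i, i.e. i is not in x and i is in I: Bob errs only when Alg errs, and he answers
   with probability at least 1/(8(c-1)) - delta >= 1/(8c). *)

Lemma sum_tupleS (U : finType) n (F : n.+1.-tuple U -> nat) :
  \sum_(t : n.+1.-tuple U) F t = \sum_(x : U) \sum_(t : n.-tuple U) F [tuple of x :: t].
Proof.
rewrite pair_big /= (reindex (fun u : U * n.-tuple U => [tuple of u.1 :: u.2])) //=.
exists (fun t : n.+1.-tuple U => (thead t, behead_tuple t)).
  by move=> [x t] _ /=; congr pair; apply: val_inj.
by move=> t _; case/tupleP: t => x t /=; exact: val_inj.
Qed.

Section NestedSets.
Variable T : finType.

Fixpoint nested (f : nat -> nat) (A : {set T}) (s : seq {set T}) : bool :=
  if s is B :: s' then [&& B \subset A, #|B| == f 0 & nested (fun i => f i.+1) B s']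
  else true.

Fixpoint nested_count (f : nat -> nat) (a n : nat) : nat :=
  if n is n'.+1 then 'C(a, f 0) * nested_count (fun i => f i.+1) (f 0) n' else 1.

Lemma nestedP (s : seq {set T}) f (A : {set T}) :
  nested f A s <-> (forall i, i < size s ->
     nth set0 s i \subset (if i is i'.+1 then nth set0 s i' else A) /\ #|nth set0 s i| = f i).
Proof.
elim: s f A => [|B s IH] f A /=; first by split => // _ i.
split.
  case/and3P=> BA /eqP BF /IH Hs [|i] //= Hi.
  by case: i Hi => [|i] Hi; exact: Hs.
move=> H; have [BA BF] := H 0 isT.
apply/and3P; split => //; first exact/eqP.
by apply/IH => -[|i] Hi; [exact: (H 1 Hi) | exact: (H i.+2 Hi)].
Qed.

Lemma card_nested n f (A : {set T}) :
  \sum_(t : n.-tuple {set T}) nested f A t = nested_count f #|A| n.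
Proof.
elim: n f A => [|n IH] f A /=.
  by rewrite (big_pred1 [tuple]) // => t; symmetry; apply/eqP; exact: tuple0.
rewrite sum_tupleS (eq_bigr (fun B : {set T} =>
  (B \in [set B : {set T} | B \subset A & #|B| == f 0]) * nested_count (fun i => f i.+1) (f 0) n));
  last first.
  move=> B _; rewrite inE /=; case/boolP: (_ && _) => [/andP[BA /eqP BF]|H].
    by rewrite mul1n -BF -IH; apply: eq_bigr => t _; rewrite BA BF eqxx.
  by rewrite mul0n big1 // => t _; case: (B \subset A) H => //=; case: (#|B| == f 0).
rewrite -big_distrl /= -cards_draws -sum1_card; congr (_ * _).
by rewrite [RHS]big_mkcond; apply: eq_bigr => B _; case: (B \in _).
Qed.

End NestedSets.

Lemma nested_countE f a n :
  nested_count f a n.+1 = 'C(a, f 0) * \prod_(1 <= i < n.+1) 'C(f i.-1, f i).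
Proof.
elim: n f a => [|n IH] f a; first by rewrite /= big_geq // !muln1.
change (nested_count f a n.+2) with ('C(a, f 0) * nested_count (fun i => f i.+1) (f 0) n.+1).
rewrite IH (big_nat_recl n.+1 1) //=; congr (_ * (_ * _)).
by apply: eq_big_nat => i /andP[i_gt0 _]; rewrite prednK.
Qed.

Lemma exists_perm_imset (T : finType) (A B : {set T}) :
  #|A| = #|B| -> exists pi : {perm T}, pi @: A = B.
Proof.
move=> AB.
pose e := enum A ++ enum (~: A); pose e' := enum B ++ enum (~: B).
have uniq_e' : uniq e'.
  by rewrite cat_uniq !enum_uniq /= andbT; apply/hasPn => x; rewrite !mem_enum inE.
have mem_e x : x \in e by rewrite mem_cat !mem_enum inE; case: (x \in A).
have size_e : size e = #|T| by rewrite size_cat -!cardE cardsC.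
have size_e' : size e' = #|T| by rewrite size_cat -!cardE cardsC.
pose g x := nth x e' (index x e).
have g_inj : injective g.
  move=> x y; rewrite /g => gxy.
  have iy : index y e < size e' by rewrite size_e' -size_e index_mem.
  move: gxy; rewrite (set_nth_default x y iy) => /eqP.
  rewrite nth_uniq // ?size_e' -?size_e ?index_mem // => /eqP ixy.
  by rewrite -(nth_index x (mem_e x)) ixy nth_index.
exists (perm g_inj).
apply/eqP; rewrite eqEcard card_imset ?AB ?leqnn ?andbT; last exact: perm_inj.
apply/subsetP => y /imsetP[x Ax ->]; rewrite permE /g.
have ix : index x e < #|A| by rewrite index_cat mem_enum Ax cardE index_mem mem_enum.
by rewrite nth_cat -cardE -AB ix -mem_enum mem_nth // -cardE -AB.
Qed.

Section Chains.
Variables (p c : nat).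
Local Notation d := (dimd p).
Local Notation js := (jsize p c).
Local Notation q := ((p - 2) %/ (c - 1)).

Lemma jsizeS_le i : js i.+1 <= js i.
Proof. exact: leq_div. Qed.

Lemma jsize_le0 i : js i <= js 0.
Proof. by elim: i => // i IH; exact: leq_trans (jsizeS_le i) IH. Qed.

Lemma jsize_le_half i : 2 <= p -> js i <= d %/ 2.
Proof.
move=> p2; apply: leq_trans (jsize_le0 i) _.
by rewrite /= /dimd (_ : p - 1 = (p - 2).+1) ?expnS ?mulKn //; lia.
Qed.

Lemma jsize_le_dim i : js i <= d.
Proof.
by apply: leq_trans (jsize_le0 i) _; rewrite /= /dimd leq_pexp2l //; lia.
Qed.

Lemma jsizeE i : q * i <= p - 2 -> js i = 2 ^ (p - 2 - q * i).
Proof.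
elim: i => [|i IH] qi; first by rewrite muln0 subn0.
have qi' : q * i <= p - 2 by apply: leq_trans qi; rewrite leq_mul2l leqnSn orbT.
rewrite /= IH // -expnB //; last by move: qi; rewrite mulnS; lia.
by congr (2 ^ _); move: qi; rewrite mulnS; lia.
Qed.

Lemma jsize_bound i : (c - 1 %| p - 2) -> i < c -> q * i <= p - 2.
Proof.
move=> dvd ic; apply: leq_trans (_ : q * (c - 1) <= _); last by rewrite divnK.
by rewrite leq_mul2l; apply/orP; right; lia.
Qed.

Lemma jsize_gt0 i : (c - 1 %| p - 2) -> i < c -> 0 < js i.
Proof. by move=> dvd ic; rewrite jsizeE ?expn_gt0 ?jsize_bound. Qed.

Lemma pow_mul_jsizeS i : (c - 1 %| p - 2) -> i.+1 < c -> 2 ^ q * js i.+1 = js i.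
Proof.
move=> dvd ic; have qi := jsize_bound dvd ic.
rewrite (jsizeE qi) (jsizeE (jsize_bound dvd (ltnW ic))) -expnD; congr (2 ^ _).
by move: qi; rewrite mulnS; move: (q * i) q => m r; lia.
Qed.

Lemma chain_okE (J : chain p c) : 0 < c -> chain_ok J = nested js setT J.
Proof.
move=> c_gt0; apply/idP/idP.
  case/andP => /eqP J0 /forallP HJ.
  apply/nestedP => -[|i]; rewrite size_tuple => ic; first by rewrite subsetT.
  by have /andP[? /eqP] := HJ (Ordinal ic).
move/nestedP; rewrite size_tuple => HJ.
apply/andP; split; first exact/eqP/(HJ 0 c_gt0).2.
apply/forallP => -[[|i] ic] //=; apply/andP; split; first exact: (HJ i.+1 ic).1.
exact/eqP/(HJ i.+1 ic).2.
Qed.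

Lemma chain_ok_card (J : chain p c) j : chain_ok J -> j < c -> #|Jc J j| = js j.
Proof.
case/andP => /eqP J0 /forallP HJ; case: j => [|j] jc //.
by have /andP[_ /eqP] := HJ (Ordinal jc).
Qed.

Lemma chain_ok_sub (J : chain p c) a b : chain_ok J -> a <= b -> b < c -> Jc J b \subset Jc J a.
Proof.
move=> okJ; elim: b => [|b IH] ab bc; first by case: a ab.
rewrite leq_eqVlt in ab; case/orP: ab => [/eqP -> //|ab].
apply: subset_trans (IH ab (ltnW bc)).
by case/andP: okJ => _ /forallP /(_ (Ordinal bc)) /andP[].
Qed.

Lemma chain_sumE (J : chain p c) i : chain_sum J i = \sum_(j < c) (i \in Jc J j) :> nat.
Proof.
rewrite ffunE inordK // ltnS -[X in _ <= X](card_ord c) -sum1_card.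
by apply: leq_sum => j _; exact: leq_b1.
Qed.

Lemma chain_sum_gt (J : chain p c) j i :
  chain_ok J -> j < c -> i \in Jc J j -> j < chain_sum J i.
Proof.
move=> okJ jc iJ; rewrite chain_sumE -(big_mkord xpredT (fun j => (i \in Jc J j) : nat)).
rewrite (big_cat_nat _ (n := j.+1)) //= -[j.+1 in X in X <= _]card_ord -sum1_card.
apply: leq_trans (leq_addr _ _); rewrite big_mkord; apply: leq_sum => k _.
by rewrite (subsetP (chain_ok_sub okJ _ jc) _ iJ) // -ltnS.
Qed.

Lemma chain_sum_le (J : chain p c) j i :
  chain_ok J -> j < c -> i \notin Jc J j -> chain_sum J i <= j.
Proof.
move=> okJ jc iJ; rewrite chain_sumE -(big_mkord xpredT (fun j => (i \in Jc J j) : nat)).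
rewrite (big_cat_nat _ (n := j)) //=; last exact: ltnW.
rewrite [X in _ + X]big1_seq ?addn0 => [|k]; last first.
  rewrite /= mem_index_iota => /andP[jk kc]; apply/eqP; rewrite eqb0.
  by apply: contra iJ; exact: (subsetP (chain_ok_sub okJ jk kc)).
rewrite -[X in _ <= X]card_ord -sum1_card big_mkord.
by apply: leq_sum => k _; exact: leq_b1.
Qed.

Definition chain_perm (pi : {perm 'I_d}) (J : chain p c) : chain p c :=
  map_tuple (fun A : {set 'I_d} => pi @: A) J.

Lemma Jc_chain_perm pi J j : Jc (chain_perm pi J) j = pi @: Jc J j.
Proof.
rewrite /Jc /=; case: (ltnP j (size J)) => jJ; first by rewrite (nth_map set0).
by rewrite !nth_default ?imset0 // size_map.
Qed.

Lemma chain_ok_perm pi J : chain_ok J -> chain_ok (chain_perm pi J).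
Proof.
case/andP => J0 /forallP HJ; apply/andP; split.
  by rewrite Jc_chain_perm card_imset //; exact: perm_inj.
apply/forallP => j; apply/implyP => j_gt0; have /implyP/(_ j_gt0)/andP[sub card] := HJ j.
by rewrite !Jc_chain_perm imsetS // card_imset //; exact: perm_inj.
Qed.

Lemma chain_permK pi : cancel (chain_perm pi) (chain_perm pi^-1).
Proof.
move=> J; apply: val_inj; rewrite /= -map_comp -[RHS]map_id; apply: eq_map => A /=.
by rewrite -imset_comp (eq_imset _ (permK pi)) imset_id.
Qed.

Lemma chain_ok_permE pi J : chain_ok (chain_perm pi J) = chain_ok J.
Proof.
apply/idP/idP; last exact: chain_ok_perm.
by move/(chain_ok_perm pi^-1); rewrite chain_permK.
Qed.

End Chains.

Section FiniteSums.
Local Open Scope ring_scope.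

Lemma sum_ffun_bool (V : nmodType) (T : finType) (P : pred {set T}) (F : {ffun T -> bool} -> V) :
  \sum_(x : {ffun T -> bool} | P [set i | x i]) F x = \sum_(S | P S) F [ffun i => i \in S].
Proof.
rewrite (reindex (fun S : {set T} => [ffun i => i \in S])) /=; last first.
  exists (fun x : {ffun T -> bool} => [set i | x i]) => [S _|x _].
    by apply/setP => i; rewrite inE ffunE.
  by apply/ffunP => i; rewrite ffunE inE.
by apply: eq_bigl => S; congr (P _); apply/setP => i; rewrite inE ffunE.
Qed.

Variable R : comPzRingType.

Lemma sum_pushforward (A B : finType) (h : A -> B) (w : A -> R) (g : B -> R) :
  \sum_(b : B) (\sum_(a | h a == b) w a) * g b = \sum_(a : A) w a * g (h a).
Proof.
under eq_bigr => b _ do rewrite big_distrl /=.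
rewrite (exchange_big_dep xpredT) //=; apply: eq_bigr => a _.
by rewrite (big_pred1 (h a)) // => b; rewrite eq_sym.
Qed.

Lemma sum_ffun_prod_marginal (I J : finType) (w : I -> J -> R) (h : J -> R) (i0 : I) :
  (forall i, \sum_(j : J) w i j = 1) ->
  \sum_(f : {ffun I -> J}) (\prod_(i : I) w i (f i)) * h (f i0) = \sum_(j : J) w i0 j * h j.
Proof.
move=> w1.
have -> : \sum_(j : J) w i0 j * h j =
    \prod_(i : I) \sum_(j : J) (if i == i0 then w i j * h j else w i j).
  rewrite [RHS](bigD1 i0) //= [X in _ * X]big1 ?mulr1; first by apply: eq_bigr => j _; rewrite eqxx.
  by move=> i /negbTE i_ne; rewrite -(w1 i); apply: eq_bigr => j _; rewrite i_ne.
rewrite bigA_distr_bigA /=; apply: eq_bigr => f _.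
rewrite [RHS](bigD1 i0) //= eqxx [in LHS](bigD1 i0) //= mulrAC; congr (_ * _).
by apply: eq_bigr => i /negbTE ->.
Qed.

Lemma exists_ge_mean (F : realFieldType) n (G : 'I_n -> F) (a : F) :
  (0 < n)%N -> a <= \sum_(i < n) G i -> exists i, a / n%:R <= G i.
Proof.
move=> n_gt0 aG; case: (boolP [exists i, a / n%:R <= G i]) => [/existsP //|/existsPn Glt].
have : \sum_(i < n) G i < \sum_(i < n) a / n%:R.
  apply: ltr_sum; first by apply/hasP; exists (Ordinal n_gt0); rewrite ?mem_index_enum.
  by move=> i _; rewrite ltNge Glt.
by rewrite sumr_const card_ord -[_ *+ n]mulr_natr divfK ?pnatr_eq0 -?lt0n // ltNge aG.
Qed.

End FiniteSums.

Section Zeta.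
Variables (R : realType) (p c : nat).
Local Notation d := (dimd p).
Local Notation js := (jsize p c).
Local Open Scope ring_scope.

Lemma zeta_ge0 (J : chain p c) : 0 <= zeta R J.
Proof.
rewrite /zeta; case: ifP => // _.
by rewrite mulr_ge0 ?invr_ge0 ?ler0n // prodr_ge0 // => i _; rewrite invr_ge0 ler0n.
Qed.

Lemma zeta_sum1 : (0 < c)%N -> \sum_(J : chain p c) zeta R J = 1.
Proof.
move=> c_gt0; rewrite (eq_bigr (fun J : chain p c => (chain_ok J)%:R *
   (('C(d, js 0)%:R)^-1 * \prod_(1 <= i < c) ('C(js i.-1, js i)%:R)^-1) : R)); last first.
  by move=> J _; rewrite /zeta; case: ifP; rewrite ?mul1r ?mul0r.
rewrite -big_distrl /= -natr_sum.
under eq_bigr => J _ do rewrite chain_okE //.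
rewrite card_nested cardsT card_ord.
have binS_gt0 i : (0 < i)%N -> (0 < 'C(js i.-1, js i))%N.
  by move=> i_gt0; rewrite bin_gt0 -(prednK i_gt0) jsizeS_le.
have bin0_gt0 : (0 < 'C(d, js 0))%N by rewrite bin_gt0 jsize_le_dim.
case: c c_gt0 binS_gt0 => // c' _ binS_gt0.
rewrite nested_countE natrM natr_prod prodfV mulrACA mulrV ?mulrV ?mulr1 //.
  rewrite unitfE prodf_seq_neq0; apply/allP => i /=; rewrite mem_index_iota => /andP[i_gt0 _].
  by rewrite pnatr_eq0 -lt0n binS_gt0.
by rewrite unitfE pnatr_eq0 -lt0n.
Qed.

Lemma zeta_le_mu (J : chain p c) : zeta R J <= mu R (chain_sum J).
Proof. by rewrite /mu (bigD1 J) //= lerDl sumr_ge0 // => J' _; exact: zeta_ge0. Qed.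

Lemma zeta_chain_perm pi (J : chain p c) : zeta R (chain_perm pi J) = zeta R J.
Proof. by rewrite /zeta chain_ok_permE. Qed.

Definition level_prob (j : nat) (S : {set 'I_d}) : R :=
  \sum_(J : chain p c) zeta R J * (Jc J j == S)%:R.

Lemma level_prob_perm j (pi : {perm 'I_d}) (S : {set 'I_d}) :
  level_prob j (pi @: S) = level_prob j S.
Proof.
rewrite /level_prob (reindex_inj (can_inj (chain_permK pi))) /=.
apply: eq_bigr => J _; rewrite zeta_chain_perm Jc_chain_perm (inj_eq (imset_inj _)) //.
exact: perm_inj.
Qed.

Lemma level_prob_binom j (S : {set 'I_d}) :
  (j < c)%N -> #|S| = js j -> level_prob j S * 'C(d, js j)%:R = 1.
Proof.
move=> jc S_card.
have -> : level_prob j S * 'C(d, js j)%:R = \sum_(S' : {set 'I_d} | #|S'| == js j) level_prob j S'.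
  rewrite (eq_bigr (fun _ => level_prob j S)); last first.
    move=> S' /eqP S'_card.
    have [pi <-] := exists_perm_imset (etrans S_card (esym S'_card)).
    exact: level_prob_perm.
  rewrite sumr_const mulr_natr; congr (_ *+ _).
  have := card_draws 'I_d (js j); rewrite card_ord => <-.
  by apply: eq_card => S'; rewrite inE.
rewrite /level_prob exchange_big /= -[RHS](zeta_sum1 (leq_ltn_trans (leq0n j) jc)).
apply: eq_bigr => J _; rewrite -big_distrr /=.
case/boolP: (chain_ok J) => okJ; last by rewrite /zeta (negbTE okJ) mul0r.
rewrite (bigD1 (Jc J j)) /=; last by rewrite chain_ok_card.
rewrite eqxx big1 ?addr0 ?mulr1 // => S' /andP[_ S'_ne].
by rewrite eq_sym (negbTE S'_ne).
Qed.

End Zeta.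

Section ChainExpectation.
Variables (R : realType) (p c s : nat) (D : cert_pair p c s -> R).
Local Open Scope ring_scope.

Definition chain_expect (f : cert_pair p c s -> chain p c -> chain p c -> R) : R :=
  \sum_(JX : chain p c) \sum_(JY : chain p c) zeta R JX * zeta R JY * \sum_A D A * f A JX JY.

Lemma eq_chain_expect f g : (forall A JX JY, f A JX JY = g A JX JY) ->
  chain_expect f = chain_expect g.
Proof.
move=> fg; apply: eq_bigr => JX _; apply: eq_bigr => JY _; congr (_ * _).
by apply: eq_bigr => A _; rewrite fg.
Qed.

Lemma chain_expectE f :
  \sum_A D A * \sum_(JX : chain p c) \sum_(JY : chain p c) zeta R JX * zeta R JY * f A JX JY =
  chain_expect f.
Proof.
under eq_bigr => A _ do rewrite big_distrr /=.
rewrite exchange_big; apply: eq_bigr => JX _.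
under eq_bigr => A _ do rewrite big_distrr /=.
rewrite exchange_big; apply: eq_bigr => JY _ /=.
by rewrite big_distrr; apply: eq_bigr => A _ /=; ring.
Qed.

Lemma mu_expect (f : cert_pair p c s -> point p c -> point p c -> R) :
  \sum_(x : point p c) \sum_(y : point p c) \sum_A mu R x * mu R y * D A * f A x y =
  chain_expect (fun A JX JY => f A (chain_sum JX) (chain_sum JY)).
Proof.
transitivity (\sum_(x : point p c) mu R x * \sum_(y : point p c) mu R y * \sum_A D A * f A x y).
  apply: eq_bigr => x _; rewrite [RHS]big_distrr /=; apply: eq_bigr => y _.
  by rewrite mulrA [RHS]big_distrr /=; apply: eq_bigr => A _; ring.
rewrite /mu (sum_pushforward (@chain_sum p c) (@zeta R p c)).
apply: eq_bigr => JX _; rewrite (sum_pushforward (@chain_sum p c) (@zeta R p c)) big_distrr.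
by apply: eq_bigr => JY _ /=; rewrite mulrA.
Qed.

Lemma chain_expectB f g :
  chain_expect (fun A JX JY => f A JX JY - g A JX JY) = chain_expect f - chain_expect g.
Proof.
rewrite -sumrB; apply: eq_bigr => JX _; rewrite -sumrB; apply: eq_bigr => JY _.
by rewrite -mulrBr -sumrB; congr (_ * _); apply: eq_bigr => A _; rewrite mulrBr.
Qed.

Lemma chain_expect_sum n (F : 'I_n -> cert_pair p c s -> chain p c -> chain p c -> R) :
  chain_expect (fun A JX JY => \sum_(j < n) F j A JX JY) = \sum_(j < n) chain_expect (F j).
Proof.
rewrite [RHS]exchange_big; apply: eq_bigr => JX _; rewrite [RHS]exchange_big.
apply: eq_bigr => JY _; rewrite -[RHS]big_distrr; congr (_ * _).
by rewrite [RHS]exchange_big; apply: eq_bigr => A _; rewrite big_distrr.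
Qed.

Lemma chain_expect_le f g : (forall A, 0 <= D A) ->
  (forall JX JY, chain_ok JX -> chain_ok JY -> forall A, f A JX JY <= g A JX JY) ->
  chain_expect f <= chain_expect g.
Proof.
move=> D_ge0 fg; apply: ler_sum => JX _; apply: ler_sum => JY _.
case/boolP: (chain_ok JX) => okX; last by rewrite /zeta (negbTE okX) !mul0r.
case/boolP: (chain_ok JY) => okY; last by rewrite /zeta (negbTE okY) mulr0 !mul0r.
rewrite ler_wpM2l ?mulr_ge0 ?zeta_ge0 // ler_sum // => A _.
by rewrite ler_wpM2l ?fg.
Qed.

Lemma chain_expect_le_sup (g : cert_pair p c s -> point p c -> point p c -> R) (delta : R) :
  (0 < c)%N -> (forall x y, 0 < mu R x -> 0 < mu R y -> \sum_A D A * g A x y <= delta) ->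
  chain_expect (fun A JX JY => g A (chain_sum JX) (chain_sum JY)) <= delta.
Proof.
move=> c_gt0 g_le.
have zeta_gt0 (J : chain p c) : zeta R J != 0 -> 0 < mu R (chain_sum J).
  by move=> zJ; apply: lt_le_trans (zeta_le_mu _ _); rewrite lt_def zJ zeta_ge0.
apply: (@le_trans _ _ (\sum_(JX : chain p c) \sum_(JY : chain p c) zeta R JX * zeta R JY * delta)).
  apply: ler_sum => JX _; apply: ler_sum => JY _.
  have [->|zX] := eqVneq (zeta R JX) 0; first by rewrite !mul0r.
  have [->|zY] := eqVneq (zeta R JY) 0; first by rewrite mulr0 !mul0r.
  by rewrite ler_wpM2l ?mulr_ge0 ?zeta_ge0 // g_le // zeta_gt0.
under eq_bigr => JX _ do rewrite -big_distrl /= -big_distrr /= zeta_sum1 // mulr1.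
by rewrite -big_distrl /= zeta_sum1 // mul1r.
Qed.

Definition cert_level (A : cert_pair p c s) (x y : point p c) (j : nat) : bool :=
  if cert_run A x y is Some (_, j') then j' == j :> nat else false.

Lemma cert_run_levels A x y :
  (cert_run A x y != None)%:R = \sum_(j < c - 1) (cert_level A x y j)%:R :> R.
Proof.
rewrite /cert_level; case: (cert_run A x y) => [[i j']|]; last by rewrite big1.
rewrite (bigD1 j') //= eqxx big1 ?addr0 // => j /negbTE.
by rewrite eq_sym -val_eqE => ->.
Qed.

Lemma sum_level_expect :
  \sum_(x : point p c) \sum_(y : point p c) \sum_A
    mu R x * mu R y * D A * (cert_run A x y != None)%:R =
  \sum_(j < c - 1) chain_expect (fun A JX JY => (cert_level A (chain_sum JX) (chain_sum JY) j)%:R).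
Proof.
rewrite mu_expect -chain_expect_sum; apply: eq_chain_expect => A JX JY.
exact: cert_run_levels.
Qed.

End ChainExpectation.

Section Reduction.
Variables (R : realType) (p c s l : nat) (D : cert_pair p c s -> R).
Hypothesis l_lt : (l.+1 < c)%N.
Local Notation d := (dimd p).
Local Notation js := (jsize p c).
Local Open Scope ring_scope.

Let c_gt0 : (0 < c)%N. Proof. exact: ltn_trans l_lt. Qed.

Lemma binom_jsize_neq0 j : 'C(d, js j)%:R != 0 :> R.
Proof. by rewrite pnatr_eq0 -lt0n bin_gt0 jsize_le_dim. Qed.

Definition chain0 : chain p c := nseq_tuple c set0.

(* The law of a zeta-chain conditioned on [Jc J j = S].  Only sets S of size [js j] are ever
   used; for the others, a point mass keeps [cond_chain j S] a probability law. *)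
Definition cond_chain (j : nat) (S : {set 'I_d}) (J : chain p c) : R :=
  if #|S| == js j then zeta R J * (Jc J j == S)%:R * 'C(d, js j)%:R else (J == chain0)%:R.

Lemma cond_chain_ge0 j S J : 0 <= cond_chain j S J.
Proof. by rewrite /cond_chain; case: ifP => _; rewrite ?mulr_ge0 ?zeta_ge0. Qed.

Lemma cond_chain_sum1 j S : (j < c)%N -> \sum_J cond_chain j S J = 1.
Proof.
move=> jc; rewrite /cond_chain; case: (boolP (#|S| == js j)) => S_card.
  by rewrite -big_distrl /= -[RHS](level_prob_binom _ jc (eqP S_card)).
by rewrite (bigD1 chain0) //= eqxx big1 ?addr0 // => J /negbTE ->.
Qed.

Lemma sum_cond_chain j (J : chain p c) (H : {set 'I_d} -> R) : (j < c)%N ->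
  \sum_(S : {set 'I_d} | #|S| == js j) ('C(d, js j)%:R)^-1 * (cond_chain j S J * H S) =
  zeta R J * H (Jc J j).
Proof.
move=> jc; case/boolP: (chain_ok J) => okJ; last first.
  rewrite /zeta (negbTE okJ) mul0r big1 // => S S_card.
  by rewrite /cond_chain S_card /zeta (negbTE okJ) !mul0r mulr0.
rewrite (bigD1 (Jc J j)) /=; last by rewrite chain_ok_card.
rewrite big1 ?addr0 => [|S /andP[S_card S_ne]]; last first.
  by rewrite /cond_chain S_card eq_sym (negbTE S_ne) !(mulr0, mul0r).
rewrite /cond_chain chain_ok_card // !eqxx mulr1.
by rewrite [zeta R _ * _]mulrC -mulrA mulKf ?binom_jsize_neq0.
Qed.

Lemma sum_cond_chain2 (JX JY : chain p c) (G : {set 'I_d} -> {set 'I_d} -> R) :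
  \sum_(S : {set 'I_d} | #|S| == js l) \sum_(I : {set 'I_d} | #|I| == js l.+1)
    ('C(d, js l)%:R)^-1 * ('C(d, js l.+1)%:R)^-1 *
      (cond_chain l S JX * cond_chain l.+1 I JY * G S I) =
  zeta R JX * zeta R JY * G (Jc JX l) (Jc JY l.+1).
Proof.
transitivity (\sum_(S : {set 'I_d} | #|S| == js l) ('C(d, js l)%:R)^-1 * (cond_chain l S JX *
   \sum_(I : {set 'I_d} | #|I| == js l.+1)
     ('C(d, js l.+1)%:R)^-1 * (cond_chain l.+1 I JY * G S I))).
  by apply: eq_bigr => S _; rewrite !big_distrr; apply: eq_bigr => I _ /=; ring.
under eq_bigr => S _ do rewrite sum_cond_chain //.
by rewrite (sum_cond_chain _ (fun S => zeta R JY * G S (Jc JY l.+1))) ?mulrA // ltnW.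
Qed.

(* The public coin: a certification pair, and for every set S a chain conditioned on
   [J_l = S] (used by Alice) and one conditioned on [J_(l+1) = S] (used by Bob). *)
Definition coin := (cert_pair p c s *
  ({ffun {set 'I_d} -> chain p c} * {ffun {set 'I_d} -> chain p c}))%type.

Definition coin_weight (co : coin) : R :=
  D co.1 * (\prod_S cond_chain l S (co.2.1 S)) * (\prod_S cond_chain l.+1 S (co.2.2 S)).

(* Bob keeps the answers (i, l+1) of Alg with i in I; [cert_out] stores the level l+1 as the
   ordinal l. *)
Definition bob_out (A : cert_pair p c s) (JY : chain p c) (I : {set 'I_d}) (m : bits s) :
  option 'I_d :=
  if A.2 (m, A.1 (chain_sum JY)) is Some (i, j) then
    if (j == l :> nat) && (i \in I) then Some i else None
  else None.

Definition protocol (co : coin) : rmi_pair d s :=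
  ([ffun x : {ffun 'I_d -> bool} => co.1.1 (chain_sum (co.2.1 [set i | x i]))],
   [ffun IM : {set 'I_d} * bits s => bob_out co.1 (co.2.2 IM.1) IM.1 IM.2]).

Definition reduction (P : rmi_pair d s) : R := \sum_(co | protocol co == P) coin_weight co.

Lemma rmi_out_protocol co (S I : {set 'I_d}) :
  rmi_out (protocol co) [ffun i => i \in S] I =
  bob_out co.1 (co.2.2 I) I (co.1.1 (chain_sum (co.2.1 S))).
Proof.
rewrite /rmi_out /= !ffunE; congr (bob_out _ _ _ (co.1.1 (chain_sum (co.2.1 _)))).
by apply/setP => i; rewrite inE ffunE.
Qed.

Lemma sum_coin (G : cert_pair p c s -> chain p c -> chain p c -> R) (S I : {set 'I_d}) :
  \sum_(co : coin) coin_weight co * G co.1 (co.2.1 S) (co.2.2 I) =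
  \sum_A D A * \sum_JX \sum_JY cond_chain l S JX * cond_chain l.+1 I JY * G A JX JY.
Proof.
rewrite -(pair_bigA _ (fun A FF => coin_weight (A, FF) * G A (FF.1 S) (FF.2 I))) /=.
apply: eq_bigr => A _.
rewrite -(pair_bigA _ (fun FX FY => coin_weight (A, (FX, FY)) * G A (FX S) (FY I))) /=.
transitivity (\sum_(FX : {ffun {set 'I_d} -> chain p c})
    D A * ((\prod_S' cond_chain l S' (FX S')) * \sum_JY cond_chain l.+1 I JY * G A (FX S) JY)).
  apply: eq_bigr => FX _; rewrite -(sum_ffun_prod_marginal _ _ (fun S' => cond_chain_sum1 S' l_lt)).
  by rewrite !big_distrr; apply: eq_bigr => FY _ /=; rewrite /coin_weight /= !mulrA.
rewrite -big_distrr /= (sum_ffun_prod_marginal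
  (fun JX => \sum_JY cond_chain l.+1 I JY * G A JX JY) S
  (fun S' => cond_chain_sum1 S' (ltnW l_lt))).
congr (_ * _); apply: eq_bigr => JX _; rewrite big_distrr.
by apply: eq_bigr => JY _; exact: mulrA.
Qed.

Lemma reduction_dist : is_dist D -> is_dist reduction.
Proof.
case=> D_ge0 D_sum1; split.
  move=> P; apply: sumr_ge0 => co _.
  by rewrite !mulr_ge0 ?D_ge0 // prodr_ge0 // => S _; exact: cond_chain_ge0.
transitivity (\sum_P reduction P * 1); first by apply: eq_bigr => P _; rewrite mulr1.
rewrite /reduction sum_pushforward (sum_coin (fun _ _ _ => 1) set0 set0) -[RHS]D_sum1.
apply: eq_bigr => A _; under eq_bigr => JX _ do under eq_bigr => JY _ do rewrite mulr1.
under eq_bigr => JX _ do rewrite -big_distrr /= cond_chain_sum1 // mulr1.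
by rewrite cond_chain_sum1 ?mulr1 // ltnW.
Qed.

Lemma reduction_out_mem P : 0 < reduction P ->
  forall I m, if P.2 (I, m) is Some i then i \in I else true.
Proof.
move=> P_gt0 I m; have [co /eqP <-|no_co] := pickP (fun co => protocol co == P); last first.
  by move: P_gt0; rewrite /reduction big_pred0 ?ltxx.
rewrite /= ffunE /bob_out /=; case: (co.1.2 _) => [[i j]|] //=.
by case: ifP => // /andP[].
Qed.

Lemma rmi_expect (phi : {ffun 'I_d -> bool} -> {set 'I_d} -> option 'I_d -> R) :
  \sum_(x : {ffun 'I_d -> bool} | #|[set i | x i]| == js l)
   \sum_(I : {set 'I_d} | #|I| == js l.+1) \sum_(P : rmi_pair d s)
     ('C(d, js l)%:R)^-1 * ('C(d, js l.+1)%:R)^-1 * reduction P * phi x I (rmi_out P x I) =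
  chain_expect D (fun A JX JY => phi [ffun i => i \in Jc JX l] (Jc JY l.+1)
                                   (bob_out A JY (Jc JY l.+1) (A.1 (chain_sum JX)))).
Proof.
set c1 := ('C(d, js l)%:R)^-1; set c2 := ('C(d, js l.+1)%:R)^-1.
pose G (S I : {set 'I_d}) (A : cert_pair p c s) (JX JY : chain p c) :=
  phi [ffun i => i \in S] I (bob_out A JY I (A.1 (chain_sum JX))).
rewrite (sum_ffun_bool (fun S : {set 'I_d} => #|S| == js l)).
transitivity (\sum_(S : {set 'I_d} | #|S| == js l) \sum_(I : {set 'I_d} | #|I| == js l.+1)
  \sum_A \sum_(JX : chain p c) \sum_(JY : chain p c)
    c1 * c2 * (D A * (cond_chain l S JX * cond_chain l.+1 I JY * G S I A JX JY))).
  apply: eq_bigr => S _; apply: eq_bigr => I _.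
  under eq_bigr do rewrite -mulrA.
  rewrite -big_distrr /= /reduction sum_pushforward.
  transitivity (c1 * c2 * \sum_co coin_weight co * G S I co.1 (co.2.1 S) (co.2.2 I)).
    by congr (_ * _); apply: eq_bigr => co _; congr (_ * phi _ _ _); exact: rmi_out_protocol.
  rewrite (sum_coin (G S I)) mulr_sumr; apply: eq_bigr => A _.
  by rewrite 2!mulr_sumr; apply: eq_bigr => JX _; rewrite !mulr_sumr.
under eq_bigr => S _ do rewrite exchange_big.
under eq_bigr => S _ do under eq_bigr => A _ do rewrite exchange_big.
under eq_bigr => S _ do under eq_bigr => A _ do under eq_bigr => JX _ do rewrite exchange_big.
rewrite exchange_big; under eq_bigr => A _ do rewrite exchange_big.
under eq_bigr => A _ do under eq_bigr => JX _ do rewrite exchange_big.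
rewrite -chain_expectE; apply: eq_bigr => A _; rewrite mulr_sumr; apply: eq_bigr => JX _.
rewrite mulr_sumr; apply: eq_bigr => JY _.
rewrite -(sum_cond_chain2 JX JY (fun S I => G S I A JX JY)) mulr_sumr.
by apply: eq_bigr => S _; rewrite mulr_sumr; apply: eq_bigr => I _; rewrite /c1 /c2; ring.
Qed.

Lemma bob_success_ge (A : cert_pair p c s) (JX JY : chain p c) : chain_ok JY ->
  (cert_level A (chain_sum JX) (chain_sum JY) l)%:R -
    (cert_bad A (chain_sum JX) (chain_sum JY))%:R <=
  (if bob_out A JY (Jc JY l.+1) (A.1 (chain_sum JX)) is Some i then i \in Jc JY l.+1 else false)%:R
  :> R.
Proof.
move=> okY; rewrite /cert_level /cert_bad /bob_out /cert_run.
case: (A.2 _) => [[i j]|]; last by rewrite /= subrr.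
case: eqP => [jl|_] /=; last by rewrite sub0r oppr_le0 ler0n.
case: (boolP (i \in Jc JY l.+1)) => iY /=; first by rewrite iY /= lerBlDr lerDl ler0n.
have := chain_sum_le okY l_lt iY; rewrite -jl => Yi.
by rewrite [(_ < chain_sum JY i)%N]ltnNge Yi andbF subrr.
Qed.

Lemma bob_error_le (A : cert_pair p c s) (JX JY : chain p c) : chain_ok JX ->
  (if bob_out A JY (Jc JY l.+1) (A.1 (chain_sum JX)) is Some i
   then (i \in Jc JY l.+1) && [ffun i => i \in Jc JX l] i else false)%:R <=
  (cert_bad A (chain_sum JX) (chain_sum JY))%:R :> R.
Proof.
move=> okX; rewrite /cert_bad /bob_out /cert_run.
case: (A.2 _) => [[i j]|] //; case: eqP => [jl|_] /=; last by rewrite ler_nat.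
case: (i \in Jc JY l.+1) => /=; last by rewrite ler_nat.
rewrite ffunE; case: (boolP (i \in Jc JX l)) => iX /=; last by rewrite andbF ler_nat.
have := chain_sum_gt okX (ltnW l_lt) iX; rewrite -jl => Xi.
by rewrite ltnNge Xi /= andbT ler_nat leq_b1.
Qed.

Lemma reduction_succeeds k t (beta delta : R) :
  (k * t)%N = js l -> t = js l.+1 -> is_dist D ->
  (forall x y, 0 < mu R x -> 0 < mu R y -> \sum_A D A * (cert_bad A x y)%:R <= delta) ->
  beta + delta <=
    chain_expect D (fun A JX JY => (cert_level A (chain_sum JX) (chain_sum JY) l)%:R) ->
  rmi_succeeds k t reduction beta delta.
Proof.
move=> kt tE Ddist D_bad level_ge; rewrite /rmi_succeeds kt tE; have D_ge0 := Ddist.1.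
have bad_le := chain_expect_le_sup c_gt0 D_bad.
split; first exact: reduction_dist.
split; first exact: reduction_out_mem.
split.
  rewrite (rmi_expect (fun x I o => (if o is Some i then i \in I else false)%:R)).
  apply: le_trans (chain_expect_le D_ge0 (fun JX JY _ okY A => bob_success_ge A JX okY)).
  by rewrite chain_expectB; lra.
rewrite (rmi_expect (fun x I o => (if o is Some i then (i \in I) && x i else false)%:R)).
by apply: le_trans bad_le; apply: chain_expect_le => // JX JY okX _ A; exact: bob_error_le.
Qed.

End Reduction.

Local Open Scope ring_scope.

Lemma half_dim_powR (R : realType) p c : (2 <= p)%N -> (0 < c - 1)%N -> (c - 1 %| p - 2)%N ->
  ((dimd p)%:R / 2) `^ (1 / (c - 1)%:R) = (2 ^ ((p - 2) %/ (c - 1)))%:R :> R.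
Proof.
move=> p2 c1 dvd.
have -> : (dimd p)%:R / 2 = ((2 ^ ((p - 2) %/ (c - 1)))%:R ^+ (c - 1) : R).
  rewrite -natrX -expnM divnK // /dimd (_ : (p - 1 = (p - 2).+1)%N); last by lia.
  by rewrite expnS natrM mulrAC mulfV ?mul1r // pnatr_eq0.
rewrite -powR_mulrn ?ler0n // -powRrM mulrCA mulrV ?unitfE ?pnatr_eq0 -?lt0n //.
by rewrite mulr1 powRr1 ?ler0n.
Qed.

Lemma reduction_loss (F : realFieldType) (c d delta : F) :
  2 <= c -> 8 * c * (c - 1) <= d -> delta <= 1 / d -> 1 / (8 * c) + delta <= 1 / 8 / (c - 1).
Proof.
move=> c2 cd dd; have cc_gt0 : 0 < 8 * c * (c - 1) by rewrite !mulr_gt0 //; lra.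
have : 1 / d <= 1 / (8 * c * (c - 1)) by rewrite !div1r lef_pV2 ?posrE //; lra.
have -> : 1 / 8 / (c - 1) = 1 / (8 * c) + 1 / (8 * c * (c - 1)).
  by field; apply/andP; split; apply/eqP; lra.
lra.
Qed.

Unset Implicit Arguments.

Theorem mainTheorem8 (R : realType) (p c s : nat) (delta : R)
  (hp : (2 <= p)%N) (hc : (2 <= c)%N)
  (hdiv : (c - 1 %| p - 2)%N) (hpos : (0 < (p - 2) %/ (c - 1))%N)
  (hd : (8 * c * (c - 1) <= dimd p)%N)
  (D : cert_pair p c s -> R)
  (hD : cert_succeeds D (1 / 8) delta)
  (hdelta : delta <= 1 / (dimd p)%:R) :
  exists k t : nat, [/\ (0 < k)%N, (0 < t)%N,
    ((dimd p)%:R / 2) `^ (1 / (c - 1)%:R) <= k%:R :> R,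
    (k * t <= dimd p %/ 2)%N &
    exists Pi : rmi_pair (dimd p) s -> R,
      rmi_succeeds k t Pi (1 / (8 * c%:R)) delta].
Proof.
case: hD => Ddist [Dsucc Dbad].
have c1_gt0 : (0 < c - 1)%N by rewrite subn_gt0.
move: Dsucc; rewrite sum_level_expect => /(exists_ge_mean c1_gt0) [l level_ge].
have l_lt : (l.+1 < c)%N by have := ltn_ord l; lia.
exists (2 ^ ((p - 2) %/ (c - 1)))%N, (jsize p c l.+1); split.
- by rewrite expn_gt0.
- exact: jsize_gt0.
- by rewrite half_dim_powR.
- by rewrite pow_mul_jsizeS ?jsize_le_half.
exists (reduction l D); apply: reduction_succeeds => //; first exact: pow_mul_jsizeS.
rewrite (natrB _ (ltnW hc)) in level_ge; apply: le_trans level_ge.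
apply: (reduction_loss (d := (dimd p)%:R)) => //.
- by rewrite ler_nat.
- by rewrite -(natrB _ (ltnW hc)) -!natrM ler_nat.
Qed.
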